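(* Fix any choice function assigning to each nonempty literal $A$ a symbol $a_A\in A$, and write $\partial_A(r):=\partial_{a_A}(r)$. Then for all extended regular expressions $r$ and $s$: \[\llbracket r\rrbracket\subseteq\llbracket s\rrbracket\iff\big(\nu(r)\Rightarrow\nu(s)\big)\ \wedge\ \big(\forall A\in\mathrm{next}(r)\ltimes\mathrm{next}(s),\ A\neq\emptyset:\ \llbracket\partial_A(r)\rrbracket\subseteq\llbracket\partial_A(s)\rrbracket\big).\]
   Context: $\Sigma$ is a countable (possibly infinite) alphabet, $\Sigma^*$ the set of finite words, $\epsilon$ the empty word. Literals are sets of symbols drawn from a fixed family $U\subseteq\mathcal P(\Sigma)$ containing $\emptyset$, $\Sigma$ and all singletons and closed under union, intersection and complement $\overline{A}=\Sigma\setminus A$. Extended regular expressions (EREs) are generated by $r,s ::= \epsilon \mid A \mid r+s \mid r\cdot s \mid r^* \mid r\,\&\,s \mid \neg r$ with $A$ a literal; the empty literal is written $\emptyset$. Semantics: $\llbracket\epsilon\rrbracket=\{\epsilon\}$, $\llbracket A\rrbracket=A$, $\llbracket r+s\rrbracket=\llbracket r\rrbracket\cup\llbracket s\rrbracket$, $\llbracket r\cdot s\rrbracket$ the concatenation, $\llbracket r^*\rrbracket=\llbracket r\rrbracket^*$, $\llbracket r\&s\rrbracket=\llbracket r\rrbracket\cap\llbracket s\rrbracket$, $\llbracket\neg r\rrbracket=\Sigma^*\setminus\llbracket r\rrbracket$. Nullability: $\nu(\epsilon)=\nu(r^* )=\mathit{true}$, $\nu(A)=\mathit{false}$, $\nu(r+s)=\nu(r)\vee\nu(s)$,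 $\nu(r\cdot s)=\nu(r\&s)=\nu(r)\wedge\nu(s)$, $\nu(\neg r)=\neg\nu(r)$. Brzozowski derivative for $a\in\Sigma$: $\partial_a(\epsilon)=\emptyset$; $\partial_a(A)=\epsilon$ if $a\in A$, else $\emptyset$; $\partial_a(r+s)=\partial_a(r)+\partial_a(s)$; $\partial_a(r\cdot s)=\partial_a(r)\cdot s+\partial_a(s)$ if $\nu(r)$, and $\partial_a(r)\cdot s$ otherwise; $\partial_a(r^* )=\partial_a(r)\cdot r^*$; $\partial_a(r\&s)=\partial_a(r)\&\partial_a(s)$; $\partial_a(\neg r)=\neg\partial_a(r)$. Join: $\mathfrak L_1\Join\mathfrak L_2=\{A_1\cap A_2,\ A_1\cap\overline{\bigcup\mathfrak L_2},\ \overline{\bigcup\mathfrak L_1}\cap A_2 \mid A_1\in\mathfrak L_1, A_2\in\mathfrak L_2\}$; left join $\mathfrak L_1\ltimes\mathfrak L_2=\{A_1\cap A_2,\ A_1\cap\overline{\bigcup\mathfrak L_2}\mid A_1\in\mathfrak L_1, A_2\in\mathfrak L_2\}$; $\mathfrak L_1\sqcap\mathfrak L_2=\{A_1\cap A_2\mid A_1\in\mathfrak L_1,A_2\in\mathfrak L_2\}$. Next literals: $\mathrm{next}(\epsilon)=\{\emptyset\}$; $\mathrm{next}(A)=\{A\}$; $\mathrm{next}(r+s)=\mathrm{next}(r)\Join\mathrm{next}(s)$; $\mathrm{next}(r\cdot s)=\mathrm{next}(r)\Join\mathrm{next}(s)$ if $\nu(r)$ and $\mathrm{next}(r)$ otherwise;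 $\mathrm{next}(r^* )=\mathrm{next}(r)$; $\mathrm{next}(r\&s)=\mathrm{next}(r)\sqcap\mathrm{next}(s)$; $\mathrm{next}(\neg r)=\mathrm{next}(r)\cup\{\bigcap_{A\in\mathrm{next}(r)}\overline{A}\}$. *)

From mathcomp Require Import all_boot.
From Stdlib Require List.
Set Implicit Arguments. Unset Strict Implicit. Unset Printing Implicit Defensive.

Definition symset (S : Type) := S -> bool.

Section ERE.
Variable S : countType.

Inductive ere :=
| Eps
| Lit of symset S
| Plus of ere & ere
| Cat of ere & ere
| Star of ere
| And of ere & ere
| Not of ere.

Definition emptyset : symset S := fun _ => false.
Definition setI (A B : symset S) : symset S := fun a => A a && B a.
Definition setC (A : symset S) : symset S := fun a => ~~ A a.
Definition bigU (L : seq (symset S)) : symset S := fun a => has (fun A => A a) L.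
Definition bigIC (L : seq (symset S)) : symset S := fun a => all (fun A => ~~ A a) L.

Fixpoint lang (r : ere) (w : seq S) : Prop :=
  match r with
  | Eps => w = [::]
  | Lit A => exists a, w = [:: a] /\ A a
  | Plus r1 r2 => lang r1 w \/ lang r2 w
  | Cat r1 r2 => exists u v, w = u ++ v /\ lang r1 u /\ lang r2 v
  | Star r1 => exists ws : seq (seq S), w = flatten ws /\ (forall v, List.In v ws -> lang r1 v)
  | And r1 r2 => lang r1 w /\ lang r2 w
  | Not r1 => ~ lang r1 w
  end.

Fixpoint nullable (r : ere) : bool :=
  match r with
  | Eps => true
  | Lit _ => false
  | Plus r1 r2 => nullable r1 || nullable r2
  | Cat r1 r2 => nullable r1 && nullable r2
  | Star _ => true
  | And r1 r2 => nullable r1 && nullable r2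
  | Not r1 => ~~ nullable r1
  end.

Fixpoint brz_deriv (a : S) (r : ere) : ere :=
  match r with
  | Eps => Lit emptyset
  | Lit A => if A a then Eps else Lit emptyset
  | Plus r1 r2 => Plus (brz_deriv a r1) (brz_deriv a r2)
  | Cat r1 r2 => if nullable r1 then Plus (Cat (brz_deriv a r1) r2) (brz_deriv a r2)
                 else Cat (brz_deriv a r1) r2
  | Star r1 => Cat (brz_deriv a r1) (Star r1)
  | And r1 r2 => And (brz_deriv a r1) (brz_deriv a r2)
  | Not r1 => Not (brz_deriv a r1)
  end.

Definition join (L1 L2 : seq (symset S)) : seq (symset S) :=
  [seq setI A1 A2 | A1 <- L1, A2 <- L2]
  ++ [seq setI A1 (setC (bigU L2)) | A1 <- L1, A2 <- L2]
  ++ [seq setI (setC (bigU L1)) A2 | A1 <- L1, A2 <- L2].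

Definition ljoin (L1 L2 : seq (symset S)) : seq (symset S) :=
  [seq setI A1 A2 | A1 <- L1, A2 <- L2]
  ++ [seq setI A1 (setC (bigU L2)) | A1 <- L1, A2 <- L2].

Definition meetfam (L1 L2 : seq (symset S)) : seq (symset S) :=
  [seq setI A1 A2 | A1 <- L1, A2 <- L2].

Fixpoint next_lits (r : ere) : seq (symset S) :=
  match r with
  | Eps => [:: emptyset]
  | Lit A => [:: A]
  | Plus r1 r2 => join (next_lits r1) (next_lits r2)
  | Cat r1 r2 => if nullable r1 then join (next_lits r1) (next_lits r2) else next_lits r1
  | Star r1 => next_lits r1
  | And r1 r2 => meetfam (next_lits r1) (next_lits r2)
  | Not r1 => next_lits r1 ++ [:: bigIC (next_lits r1)]
  end.

Fixpoint lits_in (U : symset S -> Prop) (r : ere) : Prop :=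
  match r with
  | Eps => True
  | Lit A => U A
  | Plus r1 r2 | Cat r1 r2 | And r1 r2 => lits_in U r1 /\ lits_in U r2
  | Star r1 | Not r1 => lits_in U r1
  end.

Definition literal_family (U : symset S -> Prop) : Prop :=
  U emptyset /\ U (fun _ => true) /\ (forall a : S, U (pred1 a)) /\
  (forall A B, U A -> U B -> U (fun x => A x || B x)) /\
  (forall A B, U A -> U B -> U (setI A B)) /\
  (forall A, U A -> U (setC A)).

Definition lang_sub (r s : ere) : Prop := forall w, lang r w -> lang s w.

End ERE.

From Pilot Require
Import Defs.
From mathcomp Require Import all_boot.
From Stdlib Require List.
(* Re-import so that [bigU], [setI], [setC] of Defs shadow those of finset. *)
Import Defs.
Set Implicit Arguments. Unset Strict Implicit. Unset Printing Implicit Defensive.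

(** The next literals of [r] classify symbols: two symbols lying in a common
    next literal give language-equivalent derivatives of [r], and a symbol
    outside all of them gives an empty derivative; the joins are exactly what
    is needed to refine the classifications of the subexpressions.  Now [[r]] ⊆ [[s]] iff inclusion
    holds on the empty word and for the derivatives by every symbol [a].  If
    [a] starts a word of [r], it lies in a nonempty literal [A] of the left
    join of the next literals of [r] and [s]; that literal classifies both
    [r] and [s], so derivatives by [a] may be replaced by derivatives by the
    representative [a_A]. *)

Lemma In_allpairs (T1 T2 R : Type) (f : T1 -> T2 -> R) s t z :
  List.In z [seq f x y | x <- s, y <- t] <->
  exists x y, [/\ List.In x s, List.In y t & z = f x y].
Proof.
elim: s => [|x s IH] /=; first by split=> // -[? [? []]].
rewrite List.in_app_iff IH; split.
- case=> [/List.in_map_iff [y [<- Hy]]|[x' [y [Hx Hy ->]]]].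
  + by exists x, y; split=> //; left.
  + by exists x', y; split=> //; right.
- move=> [x' [y [[<-|Hx] Hy ->]]].
  + by left; apply/List.in_map_iff; exists y.
  + by right; exists x', y.
Qed.

Section Literals.
Variable S : countType.
Implicit Types (L : seq (symset S)) (A : symset S) (a b : S).

Lemma bigUP L a : reflect (exists2 A, List.In A L & A a) (bigU L a).
Proof.
elim: L => [|B L IH]; first by constructor=> -[].
apply: (iffP orP) => [[HB|/IH [A HA Ha]]|[A [<-|HA] Ha]].
- by exists B => //; left.
- by exists A => //; right.
- by left.
- by right; apply/IH; exists A.
Qed.

Lemma bigU_cat L1 L2 a : bigU (L1 ++ L2) a = bigU L1 a || bigU L2 a.
Proof. exact: has_cat. Qed.

Lemma bigICE L a : bigIC L a = ~~ bigU L a.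
Proof. by rewrite /bigIC /bigU all_predC. Qed.

Definition same_class L a b : Prop :=
  (exists A, [/\ List.In A L, A a & A b]) \/ (~~ bigU L a /\ ~~ bigU L b).

Lemma join_ljoin L1 L2 :
  join L1 L2 = ljoin L1 L2 ++ [seq setI (setC (bigU L1)) A2 | A1 <- L1, A2 <- L2].
Proof. by rewrite /join /ljoin catA. Qed.

Lemma join_refines L1 L2 A a b : List.In A (join L1 L2) -> A a -> A b ->
  same_class L1 a b /\ same_class L2 a b.
Proof.
rewrite /join !List.in_app_iff !In_allpairs.
move=> [|[|]] [A1 [A2 [H1 H2 ->]]] /andP [Ha1 Ha2] /andP [Hb1 Hb2].
- by split; left; [exists A1 | exists A2].
- by split; [left; exists A1 | right].
- by split; [right | left; exists A2].
Qed.

Lemma In_ljoin_join L1 L2 A : List.In A (ljoin L1 L2) -> List.In A (join L1 L2).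
Proof. by rewrite join_ljoin => HA; apply/List.in_app_iff; left. Qed.

Lemma ljoin_covers L1 L2 a : L2 <> [::] -> bigU L1 a -> bigU (ljoin L1 L2) a.
Proof.
case: L2 => [//|A2' L2'] _ /bigUP [A1 H1 Ha1]; set L2 := A2' :: L2'.
rewrite bigU_cat; apply/orP; case/boolP: (bigU L2 a) => [/bigUP [A2 H2 Ha2]|N2].
- left; apply/bigUP; exists (setI A1 A2); last exact/andP.
  by apply/In_allpairs; exists A1, A2.
- right; apply/bigUP; exists (setI A1 (setC (bigU L2))); last exact/andP.
  by apply/In_allpairs; exists A1, A2'; split=> //; left.
Qed.

Lemma join_covers L1 L2 a : L1 <> [::] -> L2 <> [::] ->
  bigU L1 a || bigU L2 a -> bigU (join L1 L2) a.
Proof.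
move=> NL1 NL2; rewrite join_ljoin bigU_cat.
case/boolP: (bigU L1 a) => [H1 _|N1 /bigUP [A2 H2 Ha2]].
  by rewrite ljoin_covers.
case: L1 NL1 N1 => [//|A1 L1] _ N1; apply/orP; right; apply/bigUP.
exists (setI (setC (bigU (A1 :: L1))) A2); last exact/andP.
by apply/In_allpairs; exists A1, A2; split=> //; left.
Qed.

Lemma meetfam_covers L1 L2 a :
  bigU L1 a -> bigU L2 a -> bigU (meetfam L1 L2) a.
Proof.
move=> /bigUP [A1 H1 Ha1] /bigUP [A2 H2 Ha2]; apply/bigUP.
by exists (setI A1 A2); [apply/In_allpairs; exists A1, A2 | apply/andP].
Qed.

Lemma bigU_cat_bigIC L a : bigU (L ++ [:: bigIC L]) a.
Proof. by rewrite bigU_cat /bigU /= bigICE orbF orbN. Qed.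

End Literals.

Section Derivatives.
Variable S : countType.
Implicit Types (r s : ere S) (a : S) (w : seq S).

Lemma nullableP r : nullable r <-> lang r [::].
Proof.
elim: r => //=.
- by move=> A; split=> // -[a []].
- move=> r1 IH1 r2 IH2; rewrite -IH1 -IH2.
  by case: (nullable r1) (nullable r2) => -[]; intuition.
- move=> r1 IH1 r2 IH2; split.
  + by case/andP=> /IH1 H1 /IH2 H2; exists [::], [::].
  + by move=> [[|? ?] [[|? ?] [//= _ [/IH1 -> /IH2 ->]]]].
- by move=> r1 _; split=> // _; exists [::].
- by move=> r1 IH1 r2 IH2; rewrite -IH1 -IH2; split=> [/andP|[-> ->]].
- by move=> r1 IH1; rewrite -IH1; case: (nullable r1); intuition.
Qed.

Lemma lang_Star_cons r a w :
  lang (Star r) (a :: w) <->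
  exists u v, [/\ w = u ++ v, lang r (a :: u) & lang (Star r) v].
Proof.
split.
- move=> [ws []]; elim: ws => [//|[|b u] ws IH] /= Hw Hall.
  + by apply: IH => // v Hv; apply: Hall; right.
  + case: Hw => -> ->; exists u, (flatten ws); split=> //.
    * by apply: Hall; left.
    * by exists ws; split=> // v Hv; apply: Hall; right.
- move=> [u [v [-> Hu [ws [-> Hws]]]]].
  by exists ((a :: u) :: ws); split=> // x [<-|Hx] //; exact: Hws.
Qed.

Lemma lang_Cat_cons r1 r2 a w :
  lang (Cat r1 r2) (a :: w) <->
  (exists u v, [/\ w = u ++ v, lang r1 (a :: u) & lang r2 v]) \/
  (nullable r1 /\ lang r2 (a :: w)).
Proof.
split.
- move=> [[|b u] [v [Hw [H1 H2]]]].
  + by right; split; [apply/nullableP | rewrite Hw].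
  + by case: Hw => -> ->; left; exists u, v.
- move=> [[u [v [-> H1 H2]]]|[/nullableP H1 H2]].
  + by exists (a :: u), v.
  + by exists [::], (a :: w).
Qed.

Lemma brz_derivP a r w : lang (brz_deriv a r) w <-> lang r (a :: w).
Proof.
elim: r w => [|A|r1 IH1 r2 IH2|r1 IH1 r2 IH2|r1 IH1|r1 IH1 r2 IH2|r1 IH1] w.
- by split=> [[? [_ //]]|].
- rewrite /=; case HA: (A a); split.
  + by move=> ->; exists a.
  + by move=> [b [[_ ->]]].
  + by move=> [? [_ //]].
  + by move=> [b [[<- _]]]; rewrite HA.
- by rewrite /= IH1 IH2.
- rewrite lang_Cat_cons -IH2 /=.
  have left_part : (exists u v, w = u ++ v /\ lang (brz_deriv a r1) u /\ lang r2 v) <->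
                   (exists u v, [/\ w = u ++ v, lang r1 (a :: u) & lang r2 v]).
    by split=> [[u [v [-> [/IH1 H1 H2]]]]|[u [v [-> /IH1 H1 H2]]]]; exists u, v.
  by case: (nullable r1) => /=; rewrite left_part; intuition.
- rewrite lang_Star_cons /=.
  by split=> [[u [v [-> [/IH1 H1 H2]]]]|[u [v [-> /IH1 H1 H2]]]]; exists u, v.
- by rewrite /= IH1 IH2.
- by rewrite /= IH1.
Qed.

Definition lang_eq r s : Prop := forall w, lang r w <-> lang s w.
Definition lang_empty r : Prop := forall w, ~ lang r w.

Lemma lang_eq_Plus r1 r1' r2 r2' :
  lang_eq r1 r1' -> lang_eq r2 r2' -> lang_eq (Plus r1 r2) (Plus r1' r2').
Proof. by move=> E1 E2 w /=; rewrite E1 E2. Qed.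

Lemma lang_empty_Plus r1 r2 : lang_empty r1 -> lang_empty r2 -> lang_empty (Plus r1 r2).
Proof. by move=> E1 E2 w [/E1|/E2]. Qed.

Lemma lang_eq_Cat r1 r1' r2 : lang_eq r1 r1' -> lang_eq (Cat r1 r2) (Cat r1' r2).
Proof. by move=> E w /=; split=> -[u [v [-> [/E H1 H2]]]]; exists u, v. Qed.

Lemma lang_empty_Cat r1 r2 : lang_empty r1 -> lang_empty (Cat r1 r2).
Proof. by move=> E w [u [v [_ [/E]]]]. Qed.

End Derivatives.

Section Classification.
Variable S : countType.
Implicit Types (L : seq (symset S)) (A : symset S) (r : ere S) (a b : S).

Definition classifies L r : Prop :=
  (forall A a b, List.In A L -> A a -> A b ->
     lang_eq (brz_deriv a r) (brz_deriv b r)) /\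
  (forall a, ~~ bigU L a -> lang_empty (brz_deriv a r)).

Lemma classifies_same_class L r a b : classifies L r -> same_class L a b ->
  lang_eq (brz_deriv a r) (brz_deriv b r).
Proof.
move=> [Hin Hout] [[A [HA Ha Hb]]|[Na Nb]]; first exact: Hin HA Ha Hb.
by move=> w; split=> [/(Hout _ Na)|/(Hout _ Nb)].
Qed.

Lemma classifies_map L r r' (F : ere S -> ere S) :
  (forall e e', lang_eq e e' -> lang_eq (F e) (F e')) ->
  (forall e, lang_empty e -> lang_empty (F e)) ->
  (forall a, brz_deriv a r' = F (brz_deriv a r)) ->
  classifies L r -> classifies L r'.
Proof.
move=> Feq Fempty dF [Hin Hout]; split=> [A a b HA Ha Hb|a Na]; rewrite !dF.
- exact/Feq/(Hin _ _ _ HA Ha Hb).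
- exact/Fempty/Hout.
Qed.

Lemma classifies_join L1 L2 r1 r2 r' (F : ere S -> ere S -> ere S) :
  L1 <> [::] -> L2 <> [::] ->
  (forall e1 e1' e2 e2', lang_eq e1 e1' -> lang_eq e2 e2' ->
     lang_eq (F e1 e2) (F e1' e2')) ->
  (forall e1 e2, lang_empty e1 -> lang_empty e2 -> lang_empty (F e1 e2)) ->
  (forall a, brz_deriv a r' = F (brz_deriv a r1) (brz_deriv a r2)) ->
  classifies L1 r1 -> classifies L2 r2 -> classifies (join L1 L2) r'.
Proof.
move=> NL1 NL2 Feq Fempty dF C1 C2; split=> [A a b HA Ha Hb|a Na]; rewrite !dF.
- have [S1 S2] := join_refines HA Ha Hb.
  exact: Feq (classifies_same_class C1 S1) (classifies_same_class C2 S2).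
- have [N1 N2] : ~~ bigU L1 a /\ ~~ bigU L2 a.
    by apply/norP; apply: contra Na; apply: join_covers.
  exact: Fempty (C1.2 _ N1) (C2.2 _ N2).
Qed.

Lemma classifies_meetfam L1 L2 r1 r2 :
  classifies L1 r1 -> classifies L2 r2 -> classifies (meetfam L1 L2) (And r1 r2).
Proof.
move=> [In1 Out1] [In2 Out2]; split=> [A a b|a Na w [H1 H2]].
- rewrite In_allpairs => -[A1 [A2 [H1 H2 ->]]] /andP [Ha1 Ha2] /andP [Hb1 Hb2] w /=.
  by rewrite (In1 _ _ _ H1 Ha1 Hb1) (In2 _ _ _ H2 Ha2 Hb2).
- case/boolP: (bigU L1 a) => [U1|N1]; last exact: Out1 N1 w H1.
  case/boolP: (bigU L2 a) => [U2|N2]; last exact: Out2 N2 w H2.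
  by move: Na; rewrite meetfam_covers.
Qed.

(* The extra literal [bigIC L] collects the symbols outside [L]; on it the
   derivatives of [Not r] are all full, since those of [r] are empty. *)
Lemma classifies_Not L r : classifies L r -> classifies (L ++ [:: bigIC L]) (Not r).
Proof.
move=> [Hin Hout]; split=> [A a b|a]; last by rewrite bigU_cat_bigIC.
rewrite List.in_app_iff => -[HA Ha Hb w /=|[<- Ha Hb w /=|//]].
- by rewrite (Hin _ _ _ HA Ha Hb).
- rewrite bigICE in Ha; rewrite bigICE in Hb.
  by split=> _ H; [exact: Hout Hb w H | exact: Hout Ha w H].
Qed.

Lemma next_lits_nonempty r : next_lits r <> [::].
Proof.
elim: r => //= [r1 + r2 | r1 + r2 | r1 + r2 | r1 _]; rewrite /join /meetfam.
- by case: (next_lits r1) => // ? ?; case: (next_lits r2).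
- by case: (nullable r1) => //; case: (next_lits r1) => // ? ?; case: (next_lits r2).
- by case: (next_lits r1) => // ? ?; case: (next_lits r2).
- by case: (next_lits r1).
Qed.

Lemma next_lits_classifies r : classifies (next_lits r) r.
Proof.
elim: r => [|A|r1 C1 r2 C2|r1 C1 r2 C2|r1 C1|r1 C1 r2 C2|r1 C1] /=.
- by split=> [A a b [<-|]|a _ w [? [_ //]]].
- split=> [B a b [<- Ha Hb w|//]|a]; first by rewrite /= Ha Hb.
  by rewrite /bigU /= orbF => /negbTE Ha w; rewrite /= Ha => -[? [_ //]].
- apply: (classifies_join (@next_lits_nonempty r1) (@next_lits_nonempty r2)
    (F := @Plus S) _ _ _ C1 C2) => //.
  + exact: lang_eq_Plus.
  + exact: lang_empty_Plus.
- case Hn: (nullable r1) => /=.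
  + apply: (classifies_join (@next_lits_nonempty r1) (@next_lits_nonempty r2)
      (F := fun e1 e2 => Plus (Cat e1 r2) e2) _ _ _ C1 C2).
    * by move=> ? ? ? ? E1 E2; apply/lang_eq_Plus/E2/lang_eq_Cat.
    * by move=> ? ? E1 E2; apply/lang_empty_Plus/E2/lang_empty_Cat.
    * by move=> a /=; rewrite Hn.
  + apply: (classifies_map (F := fun e => Cat e r2) _ _ _ C1).
    * by move=> ? ?; apply: lang_eq_Cat.
    * by move=> ?; apply: lang_empty_Cat.
    * by move=> a /=; rewrite Hn.
- apply: (classifies_map (F := fun e => Cat e (Star r1)) _ _ _ C1) => //.
  + by move=> ? ?; apply: lang_eq_Cat.
  + by move=> ?; apply: lang_empty_Cat.
- exact: classifies_meetfam.
- exact: classifies_Not.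
Qed.

End Classification.

Section LiteralFamily.
Variables (S : countType) (U : symset S -> Prop).
Hypothesis HU : literal_family U.
Implicit Types (L : seq (symset S)) (r : ere S).

Definition family_in L : Prop := forall A, List.In A L -> U A.

Lemma bigU_in L : family_in L -> U (bigU L).
Proof.
have [U0 [_ [_ [UU _]]]] := HU.
elim: L => [|B L IH] HL; first exact: U0.
by apply: UU; [apply: HL; left | apply: IH => A HA; apply: HL; right].
Qed.

Lemma bigIC_in L : family_in L -> U (bigIC L).
Proof.
have [_ [UT [_ [_ [UI UC]]]]] := HU.
elim: L => [|B L IH] HL; first exact: UT.
by apply: (UI (setC B)); [apply/UC/HL; left | apply: IH => A HA; apply: HL; right].
Qed.

Lemma join_in L1 L2 : family_in L1 -> family_in L2 -> family_in (join L1 L2).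
Proof.
have [_ [_ [_ [_ [UI UC]]]]] := HU.
move=> H1 H2 A; rewrite /join !List.in_app_iff !In_allpairs.
by move=> [|[|]] [A1 [A2 [I1 I2 ->]]]; apply: UI; auto using bigU_in.
Qed.

Lemma meetfam_in L1 L2 : family_in L1 -> family_in L2 -> family_in (meetfam L1 L2).
Proof.
have [_ [_ [_ [_ [UI _]]]]] := HU.
by move=> H1 H2 A /In_allpairs [A1 [A2 [I1 I2 ->]]]; apply: UI; auto.
Qed.

Lemma next_lits_in r : lits_in U r -> family_in (next_lits r).
Proof.
elim: r => [|A|r1 IH1 r2 IH2|r1 IH1 r2 IH2|r1 IH1|r1 IH1 r2 IH2|r1 IH1] /=.
- by move=> _ A [<-|]; case: HU.
- by move=> HA B [<-|].
- by move=> [H1 H2]; apply: join_in; auto.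
- by move=> [H1 H2]; case: (nullable r1); [apply: join_in|]; auto.
- exact: IH1.
- by move=> [H1 H2]; apply: meetfam_in; auto.
- move=> H A /List.in_app_iff [|[<-|//]]; first exact: IH1.
  exact/bigIC_in/IH1.
Qed.

End LiteralFamily.

Theorem theorem4 (S : countType) (U : symset S -> Prop)
  (HU : literal_family U)
  (ch : symset S -> S)
  (Hch : forall A : symset S, U A -> (exists a, A a) -> A (ch A))
  (r s : ere S) (Hr : lits_in U r) (Hs : lits_in U s) :
  lang_sub r s <->
  ((nullable r -> nullable s) /\
   (forall A : symset S, List.In A (ljoin (next_lits r) (next_lits s)) ->
      (exists a, A a) ->
      lang_sub (brz_deriv (ch A) r) (brz_deriv (ch A) s))).
Proof.
split.
- move=> sub_rs; split=> [/nullableP/sub_rs/nullableP //|A _ _ w].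
  by move/brz_derivP/sub_rs/brz_derivP.
- move=> [Hnull Hderiv] [|a w]; first by move/nullableP/Hnull/nullableP.
  move/brz_derivP=> Hw; apply/brz_derivP.
  have [Cr Cs] := (next_lits_classifies r, next_lits_classifies s).
  have Ua : bigU (next_lits r) a by apply: contraT => /Cr.2/(_ w).
  have /bigUP [A HA Aa] := ljoin_covers (@next_lits_nonempty _ s) Ua.
  have HA' := In_ljoin_join HA.
  have UA : U A := join_in HU (next_lits_in HU Hr) (next_lits_in HU Hs) HA'.
  have [Sr Ss] := join_refines HA' Aa (Hch A UA (ex_intro _ a Aa)).
  apply/(classifies_same_class Cs Ss)/(Hderiv _ HA (ex_intro _ a Aa)).
  exact/(classifies_same_class Cr Sr).
Qed.
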